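(* Let $X$ be a finite set and $\mathcal{U}=\{C_1,\dots,C_n\}$ a family of $n$ distinct subsets of $X$ with $\bigcup\mathcal{U}=X$, and consider the Kochen-Specker-type support $S$ on $\mathcal{U}$ with $\mathcal{F}=F_{\mathbb{Z}}S$. Suppose $\mathcal{U}$ is connected. If for some $C_k\in\mathcal{U}$ and some $s\in S(C_k)$ the obstruction $\gamma(s)$ is defined and vanishes, then $\gcd\{d_m\mid m\in X\}$ divides $|\mathcal{U}|=n$, where $d_m:=|\{C\in\mathcal{U}\mid m\in C\}|$.
   Context: Outcomes are $O=\{0,1\}$. For $C\in\mathcal{U}$ and $m\in C$, $s_{C,m}\in\{0,1\}^C$ assigns $1$ to $m$ and $0$ to every other element of $C$. The Kochen-Specker support is the presheaf $S$ with $S(C)=\{s_{C,m}\mid m\in C\}$ for $C\in\mathcal{U}$ and, for $U$ contained in some member of $\mathcal{U}$, $S(U)=\{t|U: C\in\mathcal{U},\,U\subseteq C,\,t\in S(C)\}$, with restriction of functions. $\mathcal{F}=F_{\mathbb{Z}}S$: $\mathcal{F}(U)$ is the free abelian group on $S(U)$ (formal $\mathbb{Z}$-linear combinations of sections), with restriction $\sum a_tt\mapsto\sum a_t(t|V)$. Čech cochains relative to the nerve (lists $\sigma=(V_0,\dots,V_q)$ of members of $\mathcal{U}$ with $|\sigma|=\bigcap V_l\neq\varnothing$): $C^q(\mathcal{U},\mathcal{G})=\prod_\sigma\mathcal{G}(|\sigma|)$, $\delta^q(\omega)(\sigma)=\sum_{j=0}^{q+1}(-1)^j\omega(\partial_j\sigma)|_{|\sigma|}$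 ($\partial_j$ omits the $j$-th entry), $H^q=\ker\delta^q/\operatorname{im}\delta^{q-1}$. For $U\subseteq X$, $\mathcal{F}_{\bar U}(V)=\{r\in\mathcal{F}(V):r|(U\cap V)=0\}$. Obstruction of $s\in S(C_k)$: it is defined when there exist $s_i\in S(C_i)$ ($i=1,\dots,n$) with $s_k=s$ and $s_i|(C_k\cap C_i)=s|(C_k\cap C_i)$; then with $c=(s_1,\dots,s_n)\in C^0(\mathcal{U},\mathcal{F})$ and $z=\delta^0(c)$, $z$ is a $1$-cocycle of $C^\bullet(\mathcal{U},\mathcal{F}_{\bar C_k})$ and $\gamma(s):=[z]\in H^1(\mathcal{U},\mathcal{F}_{\bar C_k})$. The cover is connected if for any $C,C'\in\mathcal{U}$ there is a sequence $C=D_0,D_1,\dots,D_{p+1}=C'$ of members of $\mathcal{U}$ with $D_i\cap D_{i+1}\neq\varnothing$ for all $i$. *)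

From HB Require Import structures.
From mathcomp Require Import all_boot all_order all_algebra.
Set Implicit Arguments. Unset Strict Implicit. Unset Printing Implicit Defensive.
Import GRing.Theory.
Local Open Scope ring_scope.

(* Encoding conventions.
   - X : finType is the finite set of measurements.
   - The cover U = {C_1,...,C_n} is a function C : 'I_n -> {set X}
     (injective = the C_i are distinct).
   - A section t : V -> {0,1} (V a subset of X) is encoded by the subset
     t^{-1}(1) ⊆ V, a {set X}.  Restriction t|W is then t :&: W, and
     s_{C,m} is [set m].
   - The free abelian group on sections is embedded in the ambient group
     {ffun {set X} -> int} of integer coefficients on all subsets;
     F(V) is the subgroup of those combinations supported on S(V).
   - Restriction of formal combinations is the linear extension of t |-> t|W. *)

Section KS.
Variables (X : finType) (n : nat) (C : 'I_n -> {set X}).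

Definition fz := {ffun {set X} -> int}.

Definition KS_member (V : {set X}) : {set {set X}} := [set [set m] | m in V].

Definition KS (V : {set X}) : {set {set X}} :=
  if [exists i, C i == V] then KS_member V
  else [set t :&: V | t in \bigcup_(i | V \subset C i) KS_member (C i)].

Definition restr (W : {set X}) (r : fz) : fz :=
  [ffun B => \sum_(A : {set X} | A :&: W == B) r A].

Definition inF (V : {set X}) (r : fz) : bool :=
  [forall A, (r A != 0) ==> (A \in KS V)].

Definition inFbar (U V : {set X}) (r : fz) : bool :=
  inF V r && (restr (U :&: V) r == 0).

Definition basis (t : {set X}) : fz := [ffun A => (A == t)%:Z].

Definition delta0 (c : 'I_n -> fz) (i j : 'I_n) : fz :=
  restr (C i :&: C j) (c j) - restr (C i :&: C j) (c i).

(* the obstruction gamma(s) is defined and vanishes: there is a compatible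
   family (s_i) extending s such that z = delta^0 (s_i) is a coboundary in
   C^bullet(U, F_{\bar C_k}) *)
Definition obstruction_vanishes (k : 'I_n) (s : {set X}) : Prop :=
  exists sec : 'I_n -> {set X},
    [/\ forall i, sec i \in KS (C i),
        sec k = s,
        forall i, sec i :&: (C k :&: C i) = s :&: (C k :&: C i) &
        exists b : 'I_n -> fz,
          (forall i, C i != set0 -> inFbar (C k) (C i) (b i)) /\
          (forall i j, C i :&: C j != set0 ->
              delta0 b i j = delta0 (fun l => basis (sec l)) i j)].

Definition cover_connected : Prop :=
  forall i j : 'I_n, exists (p : nat) (D : nat -> 'I_n),
    [/\ D 0%N = i, D p.+1 = j &
        forall l, (l <= p)%N -> C (D l) :&: C (D l.+1) != set0].

Definition degree (m : X) : nat := #|[set i | m \in C i]|.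

End KS.

(** Subtracting the cochain [b] witnessing the vanishing obstruction from the
    sections [s_i] leaves a Čech 0-cocycle [e_i = s_i - b_i].  Each [e_i] is a
    combination of points of [C_i] of total weight 1 (restriction preserves
    weights and [b_i] restricts to 0), and the cocycle condition says that the
    coefficient [a m] of the point [m] does not depend on the member [C_i]
    containing it.  Double counting [\sum_i \sum_(m in C_i) e_i m] gives
    [n = \sum_m a m * d_m], so every common divisor of the [d_m] divides [n]. *)
From mathcomp Require Import all_boot all_order all_algebra intdiv zify.
Set Implicit Arguments. Unset Strict Implicit. Unset Printing Implicit Defensive.
Import GRing.Theory.
Local Open Scope ring_scope.

Lemma dvdn_big_gcdn_sum (I : finType) (d : I -> nat) (a : I -> int) (N : nat) :
  N%:Z = \sum_i a i *+ d i -> (\big[gcdn/0%N]_i d i %| N)%N.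
Proof.
move=> defN; suff: ((\big[gcdn/0%N]_i d i)%:Z %| N%:Z)%Z by [].
rewrite defN; apply: rpred_sum => i _; rewrite -mulr_natr natz dvdz_mull //.
by rewrite dvdzE /= (bigD1 i) //= dvdn_gcdl.
Qed.

Section KochenSpeckerSupport.
Variables (X : finType) (n : nat) (C : 'I_n -> {set X}).

Definition supported_on_points (V : {set X}) (r : fz X) : Prop :=
  forall A, r A != 0 -> exists2 x, x \in V & A = [set x].

Definition weight (r : fz X) : int := \sum_A r A.

Lemma inF_member_points i r : inF C (C i) r -> supported_on_points (C i) r.
Proof.
move=> /forallP r_KS A /(implyP (r_KS A)).
rewrite /KS; have ->: [exists j, C j == C i] by apply/existsP; exists i.
by case/imsetP=> x xC ->; exists x.
Qed.

Lemma basis_inF (V t : {set X}) : t \in KS C V -> inF C V (basis t).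
Proof.
move=> tV; apply/forallP => A; apply/implyP; rewrite ffunE.
by have [->|] := eqVneq A t.
Qed.

Lemma weight_restr (W : {set X}) r : weight (restr W r) = weight r.
Proof.
rewrite /weight [RHS](partition_big (fun A => A :&: W) predT) //=.
by apply: eq_bigr => B _; rewrite ffunE.
Qed.

Lemma weight_basis t : weight (basis t) = 1.
Proof.
rewrite /weight (bigD1 t) //= ffunE eqxx big1 ?addr0 // => A At.
by rewrite ffunE (negbTE At).
Qed.

Lemma weight_points (V : {set X}) r :
  supported_on_points V r -> weight r = \sum_(m in V) r [set m].
Proof.
move=> r_pts; rewrite /weight (bigID [in [set [set x] | x in V]]) /=.
rewrite [X in _ + X]big1 ?addr0; first by rewrite big_imset //; apply: in2W; apply: set1_inj.
move=> A; apply: contraNeq => /r_pts[x xV ->].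
by apply/imsetP; exists x.
Qed.

Lemma restr_points (V W : {set X}) r (m : X) :
  supported_on_points V r -> m \in W -> restr W r [set m] = r [set m].
Proof.
move=> r_pts mW; rewrite ffunE (bigD1 [set m]) /=; last first.
  by apply/eqP/setIidPl; rewrite sub1set.
rewrite big1 ?addr0 // => A /andP[/eqP AW]; apply: contraNeq => /r_pts[x _ Ax].
have: m \in A :&: W by rewrite AW set11.
by rewrite Ax inE => /andP[/set1P ->].
Qed.

Lemma inFbar_weight (U V : {set X}) r : inFbar C U V r -> weight r = 0.
Proof.
case/andP=> _ /eqP r0; rewrite -(weight_restr (U :&: V)) r0.
by apply: big1 => A _; rewrite ffunE.
Qed.

Lemma delta0_points f i j (m : X) :
    (forall l, supported_on_points (C l) (f l)) -> m \in C i -> m \in C j ->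
  delta0 C f i j [set m] = f j [set m] - f i [set m].
Proof.
move=> f_pts mi mj; have mij : m \in C i :&: C j by rewrite inE mi mj.
by rewrite /delta0 ffunE [X in _ + X]ffunE !(restr_points (f_pts _) mij).
Qed.

Lemma cover_connected_neq0 : cover_connected C -> forall i, C i != set0.
Proof.
move=> conn i; have [p [D [D0 _ DD]]] := conn i i.
by apply: contraNneq (DD 0%N isT); rewrite D0 => ->; rewrite set0I.
Qed.

Lemma cover_sum_degree (e : 'I_n -> X -> int) :
    (forall i, \sum_(m in C i) e i m = 1) ->
    (forall i j m, m \in C i -> m \in C j -> e i m = e j m) ->
  exists a : X -> int, n%:Z = \sum_m a m *+ degree C m.
Proof.
move=> e1 e_glue.
exists (fun m => if [pick i | m \in C i] is Some i then e i m else 0).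
transitivity (\sum_(i < n) \sum_(m in C i) e i m).
  by rewrite (eq_bigr _ (fun i _ => e1 i)) sumr_const card_ord natz.
rewrite (exchange_big_dep xpredT) //=; apply: eq_bigr => m _.
case: pickP => [i0 mi0|notin]; last by rewrite mul0rn big1 // => i; rewrite notin.
rewrite (eq_bigr (fun=> e i0 m)) => [|i mi]; last exact: e_glue.
by rewrite /degree -sumr_const; apply: eq_bigl => i; rewrite inE.
Qed.

End KochenSpeckerSupport.

Theorem proposition8 (X : finType) (n : nat) (C : 'I_n -> {set X})
    (Cinj : injective C)
    (Ccover : \bigcup_(i < n) C i = [set: X])
    (Hconn : cover_connected C)
    (k : 'I_n) (s : {set X}) (Hs : s \in KS C (C k))
    (Hvan : obstruction_vanishes C k s) :
  (\big[gcdn/0%N]_(m : X) degree C m %| n)%N.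
Proof.
have [sec [sec_KS _ _ [b [b_bar delta_b]]]] := Hvan.
have Cneq0 := cover_connected_neq0 Hconn.
pose c i := basis (sec i).
have c_pts i : supported_on_points (C i) (c i).
  exact/inF_member_points/basis_inF.
have b_pts i : supported_on_points (C i) (b i).
  by apply: inF_member_points; case/andP: (b_bar i (Cneq0 i)).
pose e i m := c i [set m] - b i [set m].
suff [a /dvdn_big_gcdn_sum //] : exists a : X -> int,
    n%:Z = \sum_m a m *+ degree C m.
apply: (cover_sum_degree (e := e)).
- move=> i; rewrite sumrB -(weight_points (c_pts i)) -(weight_points (b_pts i)).
  by rewrite weight_basis (inFbar_weight (b_bar i (Cneq0 i))) subr0.
- move=> i j m mi mj; have mij : C i :&: C j != set0.
    by apply/set0Pn; exists m; rewrite inE mi mj.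
  have := congr1 (fun f : fz X => f [set m]) (delta_b i j mij).
  by rewrite !delta0_points // /e /c; lia.
Qed.
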